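(* Let $h,n\geq 2$. If every subgroup of $G=S_h\times S_n$ is a symmetry group with respect to $(h,n)$, then $\gcd(h,n!)=1$.
   Context: Permutations compose as $(\sigma\tau)(x)=\sigma(\tau(x))$. Let $\mathcal{P}=(S_n)^h$ (preference profiles), with $G$ acting by $(p^{(\varphi,\psi)})_i=\psi\,p_{\varphi^{-1}(i)}$. A social preference function (SPF) is any $F:\mathcal{P}\to S_n$; its symmetry group is $G(F)=\{(\varphi,\psi)\in G: F(p^{(\varphi,\psi)})=\psi F(p)\ \forall p\}$. $U\leq G$ is a symmetry group with respect to $(h,n)$ if $U=G(F)$ for some SPF $F$. *)

From mathcomp Require Import all_boot all_fingroup.
Set Implicit Arguments. Unset Strict Implicit. Unset Printing Implicit Defensive.
Local Open Scope group_scope.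

(* Convention: mathcomp permutation product is left-to-right,
   (s * t) x = t (s x); so the paper's composition sigma tau (= sigma o tau)
   is written  tau * sigma  here. *)

Definition Gtype (h n : nat) := ('S_h * 'S_n)%type.

Definition profile (h n : nat) := {ffun 'I_h -> 'S_n}.

(* (p^(phi,psi))_i = psi o p_{phi^-1(i)} *)
Definition prof_act (h n : nat) (p : profile h n) (g : Gtype h n) : profile h n :=
  [ffun i => p (g.1^-1 i) * g.2].

Definition SPF (h n : nat) := profile h n -> 'S_n.

Definition symgroup (h n : nat) (F : SPF h n) : {set Gtype h n} :=
  [set g : Gtype h n | [forall p : profile h n, F (prof_act p g) == F p * g.2]].

Definition is_symmetry_group (h n : nat) (U : {set Gtype h n}) : Prop :=
  exists F : SPF h n, U = symgroup F.

(* If a prime p divides both h and n!, pick psi in S_n of order p (Cauchy) and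
   let phi be the cyclic rotation i |-> i + 1 of {0, ..., h-1}.  The profile
   i |-> psi^i is fixed by (phi, psi) because the order of psi divides h.  If
   the cyclic group generated by (phi, psi) were the symmetry group of some F,
   then F(P) = F(P^(phi,psi)) = psi F(P) for this fixed profile P, forcing
   psi = 1. *)

From mathcomp Require Import all_boot all_fingroup all_solvable.

Set Implicit Arguments.
Unset Strict Implicit.
Unset Printing Implicit Defensive.

Local Open Scope group_scope.

Section FixedProfiles.

Variables h n : nat.

Lemma symgroup_fixed_profile (F : SPF h n) (g : Gtype h n) (p : profile h n) :
  g \in symgroup F -> prof_act p g = p -> g.2 = 1.
Proof.
rewrite inE => /forallP /(_ p) /eqP + gp; rewrite gp => Fp.
by apply: (mulgI (F p)); rewrite mulg1 -Fp.
Qed.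

Lemma cycle_symmetry_group_fixed_profile (g : Gtype h n) (p : profile h n) :
  is_symmetry_group <[g]> -> prof_act p g = p -> g.2 = 1.
Proof.
by case=> F defF; apply: (@symgroup_fixed_profile F); rewrite -defF cycle_id.
Qed.

Definition rotation : 'S_h := perm (@ordS_inj h).

Definition power_profile (psi : 'S_n) : profile h n :=
  [ffun i : 'I_h => psi ^+ i].

Lemma power_profile_fixed (psi : 'S_n) : #[psi] %| h ->
  prof_act (power_profile psi) (rotation, psi) = power_profile psi.
Proof.
move=> psi_h; apply/ffunP => i; rewrite -[i](permKV rotation).
move: (rotation^-1 i) => j; rewrite !ffunE /= permK permE /= -expgSr.
by apply/eqP; rewrite eq_expg_mod_order modn_dvdm.
Qed.

End FixedProfiles.

Lemma exists_perm_of_prime_order (n p : nat) :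
  prime p -> p %| n`! -> exists psi : 'S_n, #[psi] = p.
Proof.
move=> p_prime p_dvd; have [|psi _ ord_psi] := @Cauchy _ p [set: 'S_n] p_prime.
  by rewrite cardsT card_Sn.
by exists psi.
Qed.

Theorem mainTheorem11 (h n : nat) :
  2 <= h -> 2 <= n ->
  (forall U : {group Gtype h n}, is_symmetry_group (U : {set Gtype h n})) ->
  coprime h n`!.
Proof.
move=> _ _ all_symmetry; apply: contraT => not_coprime.
have gcd_gt1 : 1 < gcdn h n`!.
  by rewrite ltn_neqAle eq_sym not_coprime gcdn_gt0 fact_gt0 orbT.
have p_prime := pdiv_prime gcd_gt1.
have p_dvd_gcd := pdiv_dvd (gcdn h n`!).
have [psi ord_psi] :=
  exists_perm_of_prime_order p_prime (dvdn_trans p_dvd_gcd (dvdn_gcdr _ _)).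
have psi_h : #[psi] %| h by rewrite ord_psi (dvdn_trans p_dvd_gcd (dvdn_gcdl _ _)).
have psi1 : psi = 1.
  exact: (cycle_symmetry_group_fixed_profile
            (all_symmetry <[(rotation h, psi)]>%G) (power_profile_fixed psi_h)).
by move: p_prime; rewrite -ord_psi psi1 order1.
Qed.
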